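(* Let $\mathcal{H}$ be a complex Hilbert space, let $A\in\mathcal{B}(\mathcal{H})$ be a nonzero positive operator, and let $\mathbb{A}=\begin{pmatrix}A&O\\O&A\end{pmatrix}$ on $\mathcal{H}\oplus\mathcal{H}$. Let $P,Q,R,S\in\mathcal{B}_A(\mathcal{H})$. Then $$\omega_{\mathbb{A}}\left[\begin{pmatrix}P&Q\\R&S\end{pmatrix}\right]\leq\frac12\Big(\omega_A(P)+\omega_A(S)+\sqrt{(\omega_A(P)-\omega_A(S))^2+(\omega_A(Q+R)+\omega_A(Q-R))^2}\Big),$$ and moreover the right-hand side is at most $\max\{\omega_A(P),\omega_A(S)\}+\frac{\omega_A(Q+R)+\omega_A(Q-R)}{2}$.
   Context: For a positive operator $A$ on $\mathcal{H}$, $\langle x,y\rangle_A:=\langle Ax,y\rangle$ and $\|x\|_A:=\sqrt{\langle x,x\rangle_A}$. $\mathcal{B}_A(\mathcal{H})$ is the set of $T\in\mathcal{B}(\mathcal{H})$ with $\mathcal{R}(T^*A)\subseteq\mathcal{R}(A)$ (operators admitting an $A$-adjoint). $\omega_A(T):=\sup\{|\langle Tx,x\rangle_A|:x\in\mathcal{H},\|x\|_A=1\}$. $\omega_{\mathbb{A}}$ is defined analogously on $\mathcal{H}\oplus\mathcal{H}$ with $\langle (x_1,x_2),(y_1,y_2)\rangle_{\mathbb{A}}=\langle x_1,y_1\rangle_A+\langle x_2,y_2\rangle_A$. *)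

From mathcomp Require Import all_boot all_order all_algebra.
From mathcomp Require Import all_classical all_reals.
From mathcomp Require Export complex.
Import Order.TTheory GRing.Theory Num.Theory.
Set Implicit Arguments. Unset Strict Implicit. Unset Printing Implicit Defensive.
Local Open Scope ring_scope.

Definition ipnorm (RR : realType) (W : Type) (ip : W -> W -> RR[i]) (x : W) : RR :=
  Num.sqrt (complex.Re (ip x x)).

Section Hilbert.
Variable RR : realType.
Local Notation C := RR[i].
Variable V : lmodType C.


Definition is_hilbert (ip : V -> V -> C) : Prop :=
  [/\ (forall (a : C) (x y z : V), ip (a *: x + y) z = a * ip x z + ip y z),
      (forall x y : V, ip y x = (ip x y)^*),
      (forall x : V, 0 <= ip x x),
      (forall x : V, ip x x = 0 -> x = 0) &
      (forall u : nat -> V,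
         (forall e : RR, 0 < e -> exists N : nat, forall m n : nat,
            (N <= m)%N -> (N <= n)%N -> ipnorm ip (u m - u n) < e) ->
         exists l : V, forall e : RR, 0 < e -> exists N : nat, forall n : nat,
            (N <= n)%N -> ipnorm ip (u n - l) < e)].

(* T (assumed linear) is bounded *)
Definition bounded_op (ip : V -> V -> C) (T : V -> V) : Prop :=
  exists c : RR, forall x : V, ipnorm ip (T x) <= c * ipnorm ip x.

Definition positive_op (ip : V -> V -> C) (A : V -> V) : Prop :=
  bounded_op ip A /\ forall x : V, 0 <= ip (A x) x.

Definition is_adjoint (ip : V -> V -> C) (T Ts : V -> V) : Prop :=
  forall x y : V, ip (T x) y = ip x (Ts y).

(* B_A(H): T in B(H) with R(T^* A) included in R(A) *)
Definition in_BA (ip : V -> V -> C) (A T : V -> V) : Prop :=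
  bounded_op ip T /\
  exists Ts : V -> V, is_adjoint ip T Ts /\
    forall x : V, exists y : V, Ts (A x) = A y.

Definition ipA (ip : V -> V -> C) (A : V -> V) : V -> V -> C :=
  fun x y => ip (A x) y.

End Hilbert.

Definition omega (RR : realType) (W : Type) (ipS : W -> W -> RR[i])
    (T : W -> W) : RR :=
  sup [set Normc.normc (ipS (T x) x) | x in [set x | ipnorm ipS x = 1]].

Definition ip2 (RR : realType) (V : lmodType RR[i]) (ip : V -> V -> RR[i])
    (u v : (V * V)%type) : RR[i] := ip u.1 v.1 + ip u.2 v.2.

Definition diag2 (RR : realType) (V : lmodType RR[i]) (A : V -> V)
    (u : (V * V)%type) : (V * V)%type := (A u.1, A u.2).

Definition block2 (RR : realType) (V : lmodType RR[i]) (P Q R S : V -> V)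
    (u : (V * V)%type) : (V * V)%type :=
  (P u.1 + Q u.2, R u.1 + S u.2).

From mathcomp Require Import all_boot all_order all_algebra.
From mathcomp Require Import all_classical all_reals.
From mathcomp Require Import complex ring lra.
Import Order.TTheory GRing.Theory Num.Theory Normc.
Set Implicit Arguments. Unset Strict Implicit. Unset Printing Implicit Defensive.
Local Open Scope ring_scope.

(* Write n x for ||x||_A^2.  For a unit vector (x, y) of H (+) H the A-inner
   product <T(x, y), (x, y)> is <Px, x> + <Sy, y> + (<Qy, x> + <Rx, y>).  The
   diagonal terms are at most w(P) n x and w(S) n y.  Polarization of Q + R with
   the scalar 1 and of Q - R with the scalar i bounds the cross term by
   c/2 (n x + n y), c := w(Q + R) + w(Q - R), and rescaling x and y by sqrt tau
   and 1/sqrt tau refines this to c/2 (tau n x + n y / tau) for all tau > 0.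
   Optimizing in tau, the total is at most the top eigenvalue of
   [[w(P), c/2], [c/2, w(S)]], which is the stated bound; the second inequality
   is sqrt (a^2 + c^2) <= |a| + c. *)

Definition pos_sesquilinear (RR : realType) (W : lmodType RR[i]) (B : W -> W -> RR[i]) :=
  [/\ forall a u v w, B (a *: u + v) w = a * B u w + B v w,
      forall a u v w, B u (a *: v + w) = a^*%C * B u v + B u w &
      forall u, 0 <= B u u].

Definition omega_set (RR : realType) (W : Type) (B : W -> W -> RR[i]) (T : W -> W) : set RR :=
  [set normc (B (T x) x) | x in [set x | ipnorm B x = 1]].

Lemma normc_ge0 (R : rcfType) (z : R[i]) : 0 <= normc z.
Proof. by case: z => a b; exact: sqrtr_ge0. Qed.

Lemma normc_i (R : rcfType) (z : R[i]) : normc ('i%C * z) = normc z.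
Proof. by rewrite normcM /normc /= expr0n expr1n add0r sqrtr1 mul1r. Qed.

Lemma normc_real (R : rcfType) (k : R) : normc k%:C%C = `|k|.
Proof. by rewrite /normc /= expr0n addr0 sqrtr_sqr. Qed.

Lemma conjc_i (R : rcfType) : ('i%C : R[i])^*%C = - 'i%C.
Proof. by apply/eqP; rewrite eq_complex /= oppr0 !eqxx. Qed.

Lemma omega_ge0 (RR : realType) (W : Type) (B : W -> W -> RR[i]) (T : W -> W) :
  0 <= omega B T.
Proof.
have [[[r [x x1 xr]] ub]|nosup] := pselect (has_sup (omega_set B T)).
  by apply: le_trans (normc_ge0 (B (T x) x)) (ub_le_sup ub _); exists x.
by rewrite /omega sup_out.
Qed.

Lemma quadratic_ge0_lin_eq0 (R : realFieldType) (r q : R) :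
  0 <= q -> (forall t, 0 <= 2 * t * r + t ^+ 2 * q) -> r = 0.
Proof.
move=> q0 hq; set t := - r / (q + 1).
have ht : t * (q + 1) = - r by rewrite /t mulfVK // gt_eqF // ltr_wpDl.
have := hq t; nra.
Qed.

Lemma le_top_eigenvalue (R : rcfType) (p s c nx ny D : R) :
  0 <= c -> 0 <= nx -> 0 <= ny ->
  (forall tau, 0 < tau -> D <= c / 2 * (tau * nx + ny / tau)) ->
  p * nx + s * ny + D <= (p + s + Num.sqrt ((p - s) ^+ 2 + c ^+ 2)) / 2 * (nx + ny).
Proof.
move=> c0 nx0 ny0 hD.
set r := Num.sqrt _.
have r0 : 0 <= r := sqrtr_ge0 _.
have r2 : r ^+ 2 = (p - s) ^+ 2 + c ^+ 2 by rewrite sqr_sqrtr // addr_ge0 ?sqr_ge0.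
(* (p + s + r) / 2 is the top eigenvalue of [[p, c/2], [c/2, s]]; its excesses
   u, v over p, s satisfy 4uv = c^2, so tau := 2u/c gives D <= u nx + v ny. *)
set u := (s - p + r) / 2; set v := (p - s + r) / 2.
have u0 : 0 <= u by rewrite /u; nra.
have v0 : 0 <= v by rewrite /v; nra.
have uv : 4 * (u * v) = c ^+ 2 by rewrite /u /v; nra.
suff Duv : D <= u * nx + v * ny by rewrite /u /v in Duv *; nra.
have [c00|cpos] := eqVneq c 0.
  by have := hD 1 ltr01; rewrite c00 mul0r; nra.
have cp : 0 < c by rewrite lt_def cpos.
have up : 0 < u by rewrite lt_def u0 andbT; apply: contra_neq cpos => u00; nra.
have := hD (2 * u / c) (divr_gt0 (mulr_gt0 (ltr0Sn _ 1) up) cp).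
suff -> : c / 2 * (2 * u / c * nx + ny / (2 * u / c)) = u * nx + v * ny by [].
have -> : v = c ^+ 2 / (4 * u) by rewrite -uv; field; rewrite gt_eqF.
by field; rewrite !gt_eqF.
Qed.

Lemma eigen_le_max_add (R : rcfType) (p s c : R) : 0 <= c ->
  (p + s + Num.sqrt ((p - s) ^+ 2 + c ^+ 2)) / 2 <= Num.max p s + c / 2.
Proof.
move=> c0; suff : Num.sqrt ((p - s) ^+ 2 + c ^+ 2) <= `|p - s| + c.
  by rewrite maxr_absE; lra.
rewrite -[X in _ <= X]ger0_norm ?addr_ge0 // -(sqrtr_sqr (`|p - s| + c)).
apply: ler_wsqrtr.
have := real_normK (num_real (p - s)); have := normr_ge0 (p - s); nra.
Qed.

Section PositiveSesquilinearForm.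
Context {RR : realType} {W : lmodType RR[i]} {B : W -> W -> RR[i]}.
Hypothesis hB : pos_sesquilinear B.
Local Notation sqnorm x := (complex.Re (B x x)).

Lemma formP a u v w : B (a *: u + v) w = a * B u w + B v w.
Proof. by case: hB. Qed.

Lemma formPr a u v w : B u (a *: v + w) = a^*%C * B u v + B u w.
Proof. by case: hB. Qed.

Lemma form_ge0 u : 0 <= B u u.
Proof. by case: hB. Qed.

Lemma formDl u v w : B (u + v) w = B u w + B v w.
Proof. by rewrite -[u]scale1r formP mul1r scale1r. Qed.

Lemma form0l w : B 0 w = 0.
Proof. by apply: (addrI (B 0 w)); rewrite -formDl !addr0. Qed.

Lemma formZl a u w : B (a *: u) w = a * B u w.
Proof. by rewrite -[a *: u]addr0 formP form0l addr0. Qed.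

Lemma formBl u v w : B (u - v) w = B u w - B v w.
Proof. by rewrite -scaleN1r formDl formZl mulN1r. Qed.

Lemma formDr u v w : B w (u + v) = B w u + B w v.
Proof. by rewrite -[u]scale1r formPr conjc1 mul1r scale1r. Qed.

Lemma form0r w : B w 0 = 0.
Proof. by apply: (addrI (B w 0)); rewrite -formDr !addr0. Qed.

Lemma formZr a u w : B w (a *: u) = a^*%C * B w u.
Proof. by rewrite -[a *: u]addr0 formPr form0r addr0. Qed.

Lemma sqnorm_ge0 u : 0 <= sqnorm u.
Proof. by have := form_ge0 u; rewrite lecE => /andP[]. Qed.

Lemma form_expand u u' v v' a :
  B (u + a *: v) (u' + a *: v') =
  B u u' + a^*%C * B u v' + a * B v u' + a * a^*%C * B v v'.
Proof. by rewrite !formDl !formDr !formZl !formZr; ring. Qed.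

Lemma form_conj u v : B v u = (B u v)^*%C.
Proof.
have := form_ge0 (u + 1 *: v); have := form_ge0 (u + 'i%C *: v).
rewrite !form_expand conjc1 conjc_i.
move: (form_ge0 u) (form_ge0 v).
case: (B u u) (B u v) (B v u) (B v v) => [a1 a2] [b1 b2] [c1 c2] [d1 d2].
rewrite !lecE /=; simpc.
move=> /andP[/eqP h1 _] /andP[/eqP h2 _] /andP[/eqP h3 _] /andP[/eqP h4 _].
apply/eqP; rewrite eq_complex /=; apply/andP; split; apply/eqP; lra.
Qed.

Lemma form_null u : sqnorm u = 0 -> forall w, B u w = 0.
Proof.
move=> u0.
have Re0 w : complex.Re (B u w) = 0.
  apply: (quadratic_ge0_lin_eq0 (sqnorm_ge0 w)) => t.
  have := form_ge0 (u + t%:C%C *: w); rewrite form_expand (form_conj u w) lecE.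
  move: u0; case: (B u u) (B u w) (B w w) => [a1 a2] [b1 b2] [d1 d2] /= ->.
  by simpc => /andP[_]; nra.
move=> w; have := Re0 ('i%C *: w); rewrite formZr conjc_i.
move: (Re0 w); case: (B u w) => [b1 b2] /= b10; simpc => b20.
by apply/eqP; rewrite eq_complex /= b10 -b20 !eqxx.
Qed.

Lemma sqnorm_eq1 x : ipnorm B x = 1 -> sqnorm x = 1.
Proof. by move=> x1; rewrite -(sqr_sqrtr (sqnorm_ge0 x)) -/(ipnorm B x) x1 expr1n. Qed.

Lemma sqnormZ (k : RR) x : sqnorm (k%:C%C *: x) = k ^+ 2 * sqnorm x.
Proof. by rewrite formZl formZr conjc_real mulrA; case: (B x x) => a b; simpc. Qed.

Lemma normc_form_le_omega (T : W -> W) : scalable T -> has_ubound (omega_set B T) ->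
  forall z, normc (B (T z) z) <= omega B T * sqnorm z.
Proof.
move=> TZ ub z; have := sqnorm_ge0 z; rewrite le_eqVlt => /orP[/eqP z0|zpos].
  by rewrite form_conj form_null // -z0 mulr0 conjc0 normc0.
set k := (Num.sqrt (sqnorm z))^-1.
have kz : k ^+ 2 * sqnorm z = 1 by rewrite exprVn sqr_sqrtr ?mulVf ?gt_eqF ?ltW.
have : omega_set B T (normc (B (T (k%:C%C *: z)) (k%:C%C *: z))).
  by exists (k%:C%C *: z) => //=; rewrite /ipnorm sqnormZ kz sqrtr1.
move=> /(ub_le_sup ub); rewrite TZ formZl formZr conjc_real mulrA -rmorphM.
rewrite normcM normc_real ger0_norm -?expr2 ?sqr_ge0 // => le_omega.
have := normc_ge0 (B (T z) z); have := omega_ge0 B T; rewrite /omega; nra.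
Qed.

Lemma has_ubound_omega_set (T : W -> W) M :
  (forall x, normc (B (T x) x) <= M * sqnorm x) -> has_ubound (omega_set B T).
Proof. by move=> hM; exists M => _ [x /sqnorm_eq1 x1 <-]; rewrite -[M]mulr1 -x1. Qed.

Lemma sqnorm_parallelogram a x y : a * a^*%C = 1 ->
  sqnorm (x + a *: y) + sqnorm (x + (- a) *: y) = (sqnorm x + sqnorm y) *+ 2.
Proof.
move=> a1; rewrite -!raddfD /= -raddfMn /=; congr complex.Re.
by rewrite !form_expand rmorphN mulrNN a1; ring.
Qed.

Lemma form_polarization (T : {linear W -> W}) a x y :
  B (T (x + a *: y)) (x + a *: y) - B (T (x + (- a) *: y)) (x + (- a) *: y) =
  (a^*%C * B (T x) y + a * B (T y) x) *+ 2.
Proof. by rewrite !linearD !linearZ /= !form_expand rmorphN; ring. Qed.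

Lemma normc_cross_le (T : {linear W -> W}) a x y : a * a^*%C = 1 ->
  has_ubound (omega_set B T) ->
  normc (a^*%C * B (T x) y + a * B (T y) x) <= omega B T * (sqnorm x + sqnorm y).
Proof.
move=> a1 ub; rewrite -(ler_pMn2r (_ : 0 < 2)%N) // -normcMn -form_polarization.
rewrite -mulrnAr -(sqnorm_parallelogram _ _ a1) mulrDr.
apply: le_trans (le_normcD _ _) _; rewrite normcN.
by apply: lerD; apply: normc_form_le_omega => // ? ?; exact: linearZZ.
Qed.

Lemma normc_offdiag_le (Q R : {linear W -> W}) x y :
  has_ubound (omega_set B (Q \+ R)) -> has_ubound (omega_set B (Q \- R)) ->
  normc (B (Q y) x + B (R x) y) <=
  (omega B (Q \+ R) + omega B (Q \- R)) / 2 * (sqnorm x + sqnorm y).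
Proof.
move=> ubD ubB.
have i1 : 'i%C * ('i%C)^*%C = 1 :> RR[i] by rewrite conjc_i mulrN -expr2 sqr_i opprK.
have o1 : 1 * 1^*%C = 1 :> RR[i] by rewrite conjc1 mulr1.
have := normc_cross_le x y o1 ubD; rewrite conjc1.
have := normc_cross_le x y i1 ubB.
set X := (1 * _ + _); set Y := (_ + 'i%C * _).
have e : (B (Q y) x + B (R x) y) *+ 2 = X - 'i%C * Y.
  rewrite /X /Y conjc_i /= !formBl !formDl.
  (* [ring] does not know 'i^2 = -1: check the identity modulo 'i^2 + 1. *)
  have i2 : 'i%C * 'i%C = -1 :> RR[i] by rewrite -expr2 sqr_i.
  apply/eqP; rewrite -subr_eq0 -(mul0r (B (Q y) x - B (R y) x - (B (Q x) y - B (R x) y))).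
  by rewrite -(addNr (1 : RR[i])) -i2; apply/eqP; ring.
move=> leY leX; rewrite -(ler_pMn2r (_ : 0 < 2)%N) // -normcMn e.
apply: le_trans (le_normcD _ _) _; rewrite normcN normc_i.
by apply: le_trans (lerD leX leY) _; rewrite -mulrDl -mulrnAl -mulr_natr mulfVK // pnatr_eq0.
Qed.

Lemma normc_offdiag_le_scaled (Q R : {linear W -> W}) x y tau : 0 < tau ->
  has_ubound (omega_set B (Q \+ R)) -> has_ubound (omega_set B (Q \- R)) ->
  normc (B (Q y) x + B (R x) y) <=
  (omega B (Q \+ R) + omega B (Q \- R)) / 2 * (tau * sqnorm x + sqnorm y / tau).
Proof.
move=> tau0 ubD ubB; set t := Num.sqrt tau.
have t0 : t != 0 by rewrite gt_eqF // sqrtr_gt0.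
have := normc_offdiag_le (t%:C%C *: x) (t^-1%:C%C *: y) ubD ubB.
rewrite !sqnormZ exprVn sqr_sqrtr ?(ltW tau0) // [tau^-1 * _]mulrC.
by rewrite !linearZ /= !formZl !formZr !conjc_real !mulrA -!rmorphM mulVf // mulfV // !mul1r.
Qed.

End PositiveSesquilinearForm.

Lemma ip2_pos_sesquilinear (RR : realType) (W : lmodType RR[i]) (B : W -> W -> RR[i]) :
  pos_sesquilinear B -> pos_sesquilinear (ip2 B).
Proof.
move=> hB; split => [a u v w | a u v w | u]; rewrite /ip2 /=.
- by rewrite !(formP hB); ring.
- by rewrite !(formPr hB); ring.
- by apply: addr_ge0; exact: (form_ge0 hB).
Qed.

Section BlockOperator.
Context {RR : realType} {W : lmodType RR[i]} {B : W -> W -> RR[i]}.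
Hypothesis hB : pos_sesquilinear B.
Variables P Q R S : {linear W -> W}.
Local Notation sqnorm x := (complex.Re (B x x)).
Local Notation T := (block2 P Q R S).

Lemma block2_scalable : scalable T.
Proof. by move=> a [x y]; rewrite /block2 /= !linearZ -!scalerDr. Qed.

Lemma block2_form x y :
  ip2 B (T (x, y)) (x, y) = B (P x) x + B (S y) y + (B (Q y) x + B (R x) y).
Proof. by rewrite /ip2 /= !(formDl hB); ring. Qed.

Lemma sqnorm_ip2 x y : complex.Re (ip2 B (x, y) (x, y)) = sqnorm x + sqnorm y.
Proof. exact: raddfD. Qed.

Section BoundedBlock.
Hypothesis hT : has_sup (omega_set (ip2 B) T).
Local Notation w2 := (omega (ip2 B) T).

Lemma normc_block2_le z : normc (ip2 B (T z) z) <= w2 * complex.Re (ip2 B z z).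
Proof.
exact: (normc_form_le_omega (ip2_pos_sesquilinear hB) block2_scalable hT.2).
Qed.

Lemma has_ubound_omega_diag_l : has_ubound (omega_set B P).
Proof.
apply: (has_ubound_omega_set hB (M := w2)) => x.
have := normc_block2_le (x, 0).
by rewrite block2_form sqnorm_ip2 !linear0 !(form0l hB) !(form0r hB) /= !addr0.
Qed.

Lemma has_ubound_omega_diag_r : has_ubound (omega_set B S).
Proof.
apply: (has_ubound_omega_set hB (M := w2)) => x.
have := normc_block2_le (0, x).
by rewrite block2_form sqnorm_ip2 !linear0 !(form0l hB) !(form0r hB) /= !add0r addr0.
Qed.

Lemma normc_block2_unit_le a x : a * a^*%C = 1 ->
  normc (a * B (Q x) x + a^*%C * B (R x) x) <=
  (w2 *+ 2 + omega B P + omega B S) * sqnorm x.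
Proof.
move=> a1; have := normc_block2_le (x, a *: x).
rewrite block2_form sqnorm_ip2 !linearZ /= !(formZl hB) !(formZr hB) !mulrA a1 !mul1r.
set c := (a * _ + _) => le_c.
have -> : c = B (P x) x + B (S x) x + c - B (P x) x - B (S x) x by ring.
have le_P := normc_form_le_omega hB (linearZZ P) has_ubound_omega_diag_l x.
have le_S := normc_form_le_omega hB (linearZZ S) has_ubound_omega_diag_r x.
have := le_normcD (B (P x) x + B (S x) x + c - B (P x) x) (- B (S x) x).
have := le_normcD (B (P x) x + B (S x) x + c) (- B (P x) x).
rewrite !normcN; nra.
Qed.

Lemma has_ubound_omega_add : has_ubound (omega_set B (Q \+ R)).
Proof.
apply: (has_ubound_omega_set hB) => x.
have := @normc_block2_unit_le 1 x; rewrite conjc1 !mul1r /= (formDl hB); exact.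
Qed.

Lemma has_ubound_omega_sub : has_ubound (omega_set B (Q \- R)).
Proof.
apply: (has_ubound_omega_set hB) => x.
have := @normc_block2_unit_le 'i%C x; rewrite conjc_i mulrN -expr2 sqr_i opprK.
by rewrite /= (formBl hB) mulNr -mulrBr normc_i; exact.
Qed.

Lemma omega_block2_le_bounded :
  w2 <= (omega B P + omega B S + Num.sqrt ((omega B P - omega B S) ^+ 2
         + (omega B (Q \+ R) + omega B (Q \- R)) ^+ 2)) / 2.
Proof.
apply: ge_sup hT.1 _ => _ [[x y] /(sqnorm_eq1 (ip2_pos_sesquilinear hB)) xy1 <-].
rewrite sqnorm_ip2 in xy1; rewrite block2_form.
have le_P := normc_form_le_omega hB (linearZZ P) has_ubound_omega_diag_l x.
have le_S := normc_form_le_omega hB (linearZZ S) has_ubound_omega_diag_r y.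
have le_D tau (tau0 : 0 < tau) := normc_offdiag_le_scaled hB x y tau0
  has_ubound_omega_add has_ubound_omega_sub.
have := le_top_eigenvalue (omega B P) (omega B S) (addr_ge0 (omega_ge0 _ _) (omega_ge0 _ _))
  (sqnorm_ge0 hB x) (sqnorm_ge0 hB y) le_D.
rewrite xy1 mulr1; apply: le_trans; apply: le_trans (le_normcD _ _) _.
rewrite lerD2r; apply: le_trans (le_normcD _ _) _.
exact: lerD le_P le_S.
Qed.

End BoundedBlock.

Lemma omega_block2_le :
  omega (ip2 B) T <= (omega B P + omega B S + Num.sqrt ((omega B P - omega B S) ^+ 2
                        + (omega B (Q \+ R) + omega B (Q \- R)) ^+ 2)) / 2.
Proof.
have [hT|nosup] := pselect (has_sup (omega_set (ip2 B) T)).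
  exact: omega_block2_le_bounded.
(* [sup] is 0 on a set without supremum. *)
by rewrite /omega sup_out // divr_ge0 // !addr_ge0 ?omega_ge0 ?sqrtr_ge0.
Qed.

End BlockOperator.

Lemma ipA_pos_sesquilinear (RR : realType) (V : lmodType RR[i]) (ip : V -> V -> RR[i])
    (A : {linear V -> V}) :
  is_hilbert ip -> (forall x, 0 <= ip (A x) x) -> pos_sesquilinear (ipA ip A).
Proof.
case=> ipP ip_conj _ _ _ A_ge0; split => [a u v w | a u v w | u]; rewrite /ipA.
- by rewrite linearP ipP.
- by rewrite ip_conj ipP (ip_conj v) (ip_conj w) rmorphD rmorphM.
- exact: A_ge0.
Qed.

Theorem theorem2p9 (RR : realType) (V : lmodType RR[i]) (ip : V -> V -> RR[i])
    (hH : is_hilbert ip)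
    (A : {linear V -> V}) (hA : positive_op ip A) (hA0 : exists x : V, A x != 0)
    (P Q R S : {linear V -> V})
    (hP : in_BA ip A P) (hQ : in_BA ip A Q)
    (hR : in_BA ip A R) (hS : in_BA ip A S) :
  let wA := fun T : V -> V => omega (ipA ip A) T in
  let rhs := (wA P + wA S
              + Num.sqrt ((wA P - wA S) ^+ 2
                          + (wA (fun x => Q x + R x) + wA (fun x => Q x - R x)) ^+ 2)) / 2 in
  omega (ipA (ip2 ip) (diag2 A)) (block2 P Q R S) <= rhs /\
  rhs <= Num.max (wA P) (wA S)
         + (wA (fun x => Q x + R x) + wA (fun x => Q x - R x)) / 2.
Proof.
move=> wA rhs; split.
  exact: (omega_block2_le (ipA_pos_sesquilinear hH hA.2)).
by apply: eigen_le_max_add; rewrite addr_ge0 ?omega_ge0.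
Qed.
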